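(* Let $G$ be a finite group and $T$ a $G$-Tambara functor. The set $\mathrm{RadId}_G(T)$ of radical Tambara ideals of $T$, ordered by inclusion, is a frame. Meets are given by levelwise intersections, and joins are given by $\bigvee_\lambda I_\lambda=\sqrt{\sum_\lambda I_\lambda}$, where $\sum_\lambda I_\lambda$ is the Tambara ideal with $(\sum_\lambda I_\lambda)(G/H)=\sum_\lambda I_\lambda(G/H)$.
   Context: All rings are commutative with unit. A $G$-Tambara functor $T$ consists of commutative rings $T(G/H)$ for subgroups $H\le G$ with restriction ring maps, additive transfer maps, multiplicative norm maps and conjugation isomorphisms satisfying the standard Tambara axioms (Hill–Mazur). A Tambara ideal is a family of ring ideals $I(G/H)\subseteq T(G/H)$ closed under restriction, transfer, norm and conjugation; levelwise intersections and levelwise sums of Tambara ideals are Tambara ideals. $\langle x\rangle$ denotes the Tambara ideal generated by an element $x$, and $\langle x\rangle^n$ its $n$-fold product, where the product $IJ$ is the Tambara ideal generated by the levelwise products $I(G/H)J(G/H)$. The radical $\sqrt I$ has $\sqrt I(G/H)=\{x\in T(G/H)\mid \langle x\rangle^n\subseteq I\text{ for some }n\ge1\}$; $I$ is radical if $I=\sqrt I$. A frame is a complete lattice in which finite meets distribute over arbitrary joins. *)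

(* G-Tambara functors for a finite group G, presented (Tambara)
   as functors on finite G-sets with restriction / transfer / norm along
   equivariant maps; the levels T(G/H) are the values on the orbits G/H. *)
From HB Require Import structures.
From mathcomp Require Import all_boot all_order all_algebra all_fingroup.
Set Implicit Arguments. Unset Strict Implicit. Unset Printing Implicit Defensive.
Import GRing.Theory.

Section GSets.
Variable gT : finGroupType.

Record gset := GSet {
  gcar :> finType;
  gsact : gcar -> gT -> gcar;
  gsact1 : forall x, gsact x 1%g = x;
  gsactM : forall x g h, gsact x (g * h)%g = gsact (gsact x g) h }.

Record gmap (X Y : gset) := GMap {
  gfun :> X -> Y;
  gfunE : forall x g, gfun (gsact x g) = gsact (gfun x) g }.

Definition gid (X : gset) : gmap X X := @GMap X X id (fun _ _ => erefl).

Lemma gcomp_proof (X Y Z : gset) (f : gmap Y Z) (g : gmap X Y) x h :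
  f (g (gsact x h)) = gsact (f (g x)) h.
Proof. by rewrite !gfunE. Qed.

Definition gcomp (X Y Z : gset) (f : gmap Y Z) (g : gmap X Y) : gmap X Z :=
  GMap (gcomp_proof f g).

Definition gempty : gset :=
  @GSet void (fun x _ => x) (fun _ => erefl) (fun _ _ _ => erefl).

Definition sum_act (X Y : gset) (z : (X + Y)%type) (g : gT) : (X + Y)%type :=
  match z with inl x => inl (gsact x g) | inr y => inr (gsact y g) end.

Lemma sum_act1 (X Y : gset) z : @sum_act X Y z 1%g = z.
Proof. by case: z => x /=; rewrite gsact1. Qed.

Lemma sum_actM (X Y : gset) z g h :
  @sum_act X Y z (g * h)%g = sum_act (sum_act z g) h.
Proof. by case: z => x /=; rewrite gsactM. Qed.

Definition gsum (X Y : gset) : gset := GSet (@sum_act1 X Y) (@sum_actM X Y).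

Definition ginl (X Y : gset) : gmap X (gsum X Y) :=
  @GMap X (gsum X Y) inl (fun _ _ => erefl).
Definition ginr (X Y : gset) : gmap Y (gsum X Y) :=
  @GMap Y (gsum X Y) inr (fun _ _ => erefl).

Definition is_pullback (X Y Y' W : gset) (f : gmap X Y) (g : gmap Y' Y)
    (g' : gmap W X) (f' : gmap W Y') :=
  (forall w, f (g' w) = g (f' w)) /\
  (forall x y, f x = g y -> exists! w, g' w = x /\ f' w = y).

(* exponential diagram: dependent product Pi_f A for p : A -> X, f : X -> Y.
   An element is a pair (y, s) with s a section of p over the fibre f^-1(y). *)
Section Exponential.
Variables (A X Y : gset) (p : gmap A X) (f : gmap X Y).

Definition pi_ok (ys : Y * {ffun X -> option A}) : bool :=
  [forall x, if f x == ys.1 then (if ys.2 x is Some a then p a == x else false)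
             else ys.2 x == None].

Definition pi_car := {ys : Y * {ffun X -> option A} | pi_ok ys}.

Definition pi_raw (ys : Y * {ffun X -> option A}) (g : gT) :=
  (gsact ys.1 g, [ffun x => omap (fun a => gsact a g) (ys.2 (gsact x g^-1%g))]).

Lemma pi_raw_ok ys g : pi_ok ys -> pi_ok (pi_raw ys g).
Proof.
move=> /forallP ok; apply/forallP => x /=; rewrite ffunE.
have := ok (gsact x g^-1%g); rewrite gfunE.
have -> : (gsact (f x) g^-1 == ys.1) = (f x == gsact ys.1 g).
  apply/eqP/eqP => [<-|->]; by rewrite -gsactM ?mulVg ?mulgV gsact1.
case: eqP => _; last by case: (ys.2 _).
case: (ys.2 _) => [a /eqP pa|//] /=.
by rewrite gfunE pa -gsactM mulVg gsact1.
Qed.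

Definition pi_act (w : pi_car) (g : gT) : pi_car :=
  exist _ (pi_raw (val w) g) (pi_raw_ok g (valP w)).

Lemma pi_act1 w : pi_act w 1%g = w.
Proof.
apply: val_inj; case: w => [[y s] ok] /=; rewrite /pi_raw /= gsact1.
congr (_, _); apply/ffunP => x; rewrite ffunE invg1 gsact1.
by case: (s x) => //= a; rewrite gsact1.
Qed.

Lemma pi_actM w g h : pi_act w (g * h)%g = pi_act (pi_act w g) h.
Proof.
apply: val_inj; case: w => [[y s] ok] /=; rewrite /pi_raw /= gsactM.
congr (_, _); apply/ffunP => x; rewrite !ffunE invMg gsactM.
by case: (s _) => //= a; rewrite gsactM.
Qed.

Definition gpi : gset := GSet pi_act1 pi_actM.

Definition exp_pi : gmap gpi Y :=
  @GMap gpi Y (fun w : pi_car => (val w).1) (fun _ _ => erefl).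

(* E = { (a, (y,s)) | s (p a) = Some a }  ( ~= X x_Y Pi_f A ) *)
Definition ev_ok (aw : A * pi_car) : bool := (val aw.2).2 (p aw.1) == Some aw.1.

Definition ev_car := {aw : A * pi_car | ev_ok aw}.

Lemma ev_raw_ok aw g : ev_ok aw -> ev_ok (gsact aw.1 g, pi_act aw.2 g).
Proof.
rewrite /ev_ok /= ffunE gfunE -gsactM mulgV gsact1 => /eqP -> //.
Qed.

Definition ev_act (v : ev_car) (g : gT) : ev_car :=
  exist _ (gsact (val v).1 g, pi_act (val v).2 g) (ev_raw_ok g (valP v)).

Lemma ev_act1 v : ev_act v 1%g = v.
Proof. by apply: val_inj; case: v => [[a w] ok] /=; rewrite gsact1 pi_act1. Qed.

Lemma ev_actM v g h : ev_act v (g * h)%g = ev_act (ev_act v g) h.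
Proof. by apply: val_inj; case: v => [[a w] ok] /=; rewrite gsactM pi_actM. Qed.

Definition gev : gset := GSet ev_act1 ev_actM.

Definition exp_e : gmap gev gpi :=
  @GMap gev gpi (fun v : ev_car => (val v).2) (fun _ _ => erefl).
Definition exp_ev : gmap gev A :=
  @GMap gev A (fun v : ev_car => (val v).1) (fun _ _ => erefl).

End Exponential.

(* the orbit G/H, realised as the right cosets H x with right multiplication *)
Section Orbit.
Variable H : {group gT}.
Local Open Scope group_scope.

Definition orb_car := {C : {set gT} | C \in rcosets H [set: gT]}.

Lemma orb_raw_ok (C : {set gT}) g :
  C \in rcosets H [set: gT] -> C :* g \in rcosets H [set: gT].
Proof.
case/rcosetsP => x _ ->; apply/rcosetsP; exists (x * g)%g; first by rewrite inE.
by rewrite rcosetM.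
Qed.

Definition orb_act (C : orb_car) (g : gT) : orb_car :=
  exist _ (val C :* g) (orb_raw_ok g (valP C)).

Lemma orb_act1 C : orb_act C 1%g = C.
Proof. by apply: val_inj; rewrite /= rcoset1. Qed.

Lemma orb_actM C g h : orb_act C (g * h)%g = orb_act (orb_act C g) h.
Proof. by apply: val_inj; rewrite /= rcosetM. Qed.

Definition orbit : gset := GSet orb_act1 orb_actM.
End Orbit.

End GSets.

Local Open Scope ring_scope.

Record tambara (gT : finGroupType) := Tambara {
  tT :> gset gT -> comPzRingType;
  tR : forall X Y : gset gT, gmap X Y -> tT Y -> tT X;
  tTr : forall X Y : gset gT, gmap X Y -> tT X -> tT Y;
  tN : forall X Y : gset gT, gmap X Y -> tT X -> tT Y;
  tR_id : forall X a, tR (gid X) a = a;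
  tTr_id : forall X a, tTr (gid X) a = a;
  tN_id : forall X a, tN (gid X) a = a;
  tR_comp : forall X Y Z (f : gmap Y Z) (g : gmap X Y) a,
    tR (gcomp f g) a = tR g (tR f a);
  tTr_comp : forall X Y Z (f : gmap Y Z) (g : gmap X Y) a,
    tTr (gcomp f g) a = tTr f (tTr g a);
  tN_comp : forall X Y Z (f : gmap Y Z) (g : gmap X Y) a,
    tN (gcomp f g) a = tN f (tN g a);
  tR_rmorph : forall X Y (f : gmap X Y),
    [/\ tR f 0 = 0, tR f 1 = 1, (forall a b, tR f (a + b) = tR f a + tR f b)
      & (forall a b, tR f (a * b) = tR f a * tR f b)];
  tTr_additive : forall X Y (f : gmap X Y),
    tTr f 0 = 0 /\ (forall a b, tTr f (a + b) = tTr f a + tTr f b);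
  tN_multiplicative : forall X Y (f : gmap X Y),
    tN f 1 = 1 /\ (forall a b, tN f (a * b) = tN f a * tN f b);
  tBC_Tr : forall X Y Y' W (f : gmap X Y) (g : gmap Y' Y) (g' : gmap W X)
      (f' : gmap W Y'), is_pullback f g g' f' ->
    forall a, tR g (tTr f a) = tTr f' (tR g' a);
  tBC_N : forall X Y Y' W (f : gmap X Y) (g : gmap Y' Y) (g' : gmap W X)
      (f' : gmap W Y'), is_pullback f g g' f' ->
    forall a, tR g (tN f a) = tN f' (tR g' a);
  tdistr : forall A X Y (p : gmap A X) (f : gmap X Y) a,
    tN f (tTr p a) = tTr (exp_pi p f) (tN (exp_e p f) (tR (exp_ev p f) a));
  tempty : forall a b : tT (gempty gT), a = b;
  tcoprod : forall X Y : gset gT,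
    bijective (fun c : tT (gsum X Y) => (tR (ginl X Y) c, tR (ginr X Y) c))
}.

Section Ideals.
Variables (gT : finGroupType) (T : tambara gT).

Definition tfam := forall H : {group gT}, T (orbit H) -> Prop.

Definition tsub (I J : tfam) := forall H x, I H x -> J H x.
Definition teq (I J : tfam) := forall H x, I H x <-> J H x.

(* Tambara ideal: levelwise ring ideals, closed under restriction, transfer,
   norm and conjugation (= restriction along G-maps between orbits) *)
Definition is_tideal (I : tfam) :=
  [/\ (forall H, I H 0),
      (forall H a b, I H a -> I H b -> I H (a + b)),
      (forall H a b, I H b -> I H (a * b)),
      (forall H K (f : gmap (orbit H) (orbit K)) a, I K a -> I H (tR f a))
    & (forall H K (f : gmap (orbit H) (orbit K)) a,
         I H a -> I K (tTr f a) /\ I K (tN f a))].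

Definition tgen (S : tfam) : tfam :=
  fun K y => forall J, is_tideal J -> tsub S J -> J K y.
Definition tgen1 (H : {group gT}) (x : T (orbit H)) : tfam :=
  fun K y => forall J, is_tideal J -> J H x -> J K y.

Definition tprod (I J : tfam) : tfam :=
  tgen (fun K z => exists a b, [/\ I K a, J K b & z = a * b]).

Fixpoint tpow (I : tfam) (n : nat) : tfam :=
  match n with
  | 0 => fun _ _ => True
  | 1 => I
  | (_.+1 as m).+1 => tprod (tpow I m) I
  end.

Definition tradical (I : tfam) : tfam :=
  fun H x => exists n, (1 <= n)%N /\ tsub (tpow (tgen1 x) n) I.

Definition is_radical (I : tfam) := teq I (tradical I).

Definition is_radideal (I : tfam) := is_tideal I /\ is_radical I.

Definition tsumfam (L : Type) (I : L -> tfam) : tfam :=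
  fun K y => exists (n : nat) (l : 'I_n -> L) (a : 'I_n -> T (orbit K)),
    (forall i, I (l i) K (a i)) /\ y = \sum_(i < n) a i.

Definition tcap (L : Type) (I : L -> tfam) : tfam := fun K y => forall l, I l K y.
Definition tmeet (I J : tfam) : tfam := fun K y => I K y /\ J K y.

Definition tjoin (L : Type) (I : L -> tfam) : tfam := tradical (tsumfam I).

End Ideals.

From mathcomp Require Import all_boot all_order all_algebra all_fingroup.
From Stdlib Require Import FunctionalExtensionality ProofIrrelevance.

(* Everything rests on two facts: levelwise sums of Tambara ideals are closed
   under norms, and sqrt I = {x | x ^+ n \in I for some n}.  For the first,
   [a + b] is the transfer of [(a, b)] along a codiagonal, so by the
   distributive law [N (a + b)] is a transfer of norms over G-sets each orbit
   of which restricts [(a, b)] to [a] or to [b]; splitting off one orbit makes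
   each such norm a multiple of a norm from a single summand.  For the second,
   let Q_j be the closure under sums and transfers of the multiples of
   products of at least [j] monomials [N_b (R_c x)].  The same orbit-splitting
   arguments show that Q_j is a Tambara ideal and Q_j Q_1 <= Q_(j+1), so
   <x>^j <= Q_j; and a product of more than [K n] monomials, [K] bounding the
   number of distinct monomials at a level, repeats one of them [n] times,
   whence Q_(K n + 1) <= I as soon as [x ^+ n \in I].  Meets, joins and the
   frame law then follow as for ideals of a commutative ring. *)

Set Implicit Arguments.
Unset Strict Implicit.
Unset Printing Implicit Defensive.
Import GRing.Theory.

Section GSetTheory.
Variable gT : finGroupType.
Implicit Types X Y W : gset gT.

Lemma gmap_ext X Y (f g : gmap X Y) : f =1 g -> f = g.
Proof.
case: f g => f fE [g gE] /= /functional_extensionality eq_fg; subst g.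
by congr GMap; apply: proof_irrelevance.
Qed.

Lemma gsact_inj X g : injective (fun x : X => gsact x g).
Proof. by move=> x y /= E; rewrite -[x]gsact1 -[y]gsact1 -(mulgV g) !gsactM E. Qed.

Definition ginvariant X (P : pred X) := forall x g, P (gsact x g) = P x.

Section SubGSet.
Variables (W : gset gT) (P : pred W).
Hypothesis P_inv : ginvariant P.

Definition gsub_act (w : {w | P w}) g : {w | P w} :=
  exist P (gsact (val w) g) (etrans (P_inv _ _) (valP w)).

Lemma gsub_act1 w : gsub_act w 1%g = w.
Proof. by apply: val_inj; rewrite /= gsact1. Qed.

Lemma gsub_actM w g h : gsub_act w (g * h)%g = gsub_act (gsub_act w g) h.
Proof. by apply: val_inj; rewrite /= gsactM. Qed.

Definition gsub : gset gT := GSet gsub_act1 gsub_actM.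
End SubGSet.

Definition gprod_act X Y (p : X * Y) g : X * Y := (gsact p.1 g, gsact p.2 g).

Lemma gprod_act1 X Y p : @gprod_act X Y p 1%g = p.
Proof. by case: p => a b; rewrite /gprod_act /= !gsact1. Qed.

Lemma gprod_actM X Y p g h :
  @gprod_act X Y p (g * h)%g = gprod_act (gprod_act p g) h.
Proof. by case: p => a b; rewrite /gprod_act /= !gsactM. Qed.

Definition gprod X Y : gset gT := GSet (@gprod_act1 X Y) (@gprod_actM X Y).

Section Pullback.
Variables (A X Y : gset gT) (o : gmap A Y) (f : gmap X Y).

Definition gpb_pred : pred (gprod A X) := fun q => o q.1 == f q.2.

Lemma gpb_pred_inv : ginvariant gpb_pred.
Proof.
move=> q g; rewrite /gpb_pred /= !gfunE.
by apply/eqP/eqP => [|->] //; apply: gsact_inj.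
Qed.

Definition gpb := gsub gpb_pred_inv.

Definition gpb_fst : gmap gpb A :=
  @GMap gT gpb A (fun w : {q | gpb_pred q} => (val w).1) (fun _ _ => erefl).
Definition gpb_snd : gmap gpb X :=
  @GMap gT gpb X (fun w : {q | gpb_pred q} => (val w).2) (fun _ _ => erefl).

Lemma gpb_pullback : is_pullback f o gpb_snd gpb_fst.
Proof.
split=> [w|x a E] /=; first by rewrite (eqP (valP w)).
have q_ok : gpb_pred (a, x) by rewrite /gpb_pred /= E.
exists (exist _ (a, x) q_ok); split => // w [E1 E2].
by apply: val_inj; rewrite /= -E1 -E2; case: (val w).
Qed.
End Pullback.

Section Orbits.
Local Open Scope group_scope.

Lemma obase_proof (H : {group gT}) : H :* 1 \in rcosets H [set: gT].
Proof. by apply/rcosetsP; exists 1; rewrite ?inE. Qed.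

Definition obase (H : {group gT}) : orbit H :=
  exist (fun C => C \in rcosets H [set: gT]) _ (obase_proof H).

Lemma orbit_gsact (H : {group gT}) (C : orbit H) : exists x, C = gsact (obase H) x.
Proof.
case: C => C C_coset; case/rcosetsP: (C_coset) => x _ defC.
by exists x; apply: val_inj; rewrite /= defC rcoset1.
Qed.

Lemma orbit_gmap_ext (H : {group gT}) Y (f g : gmap (orbit H) Y) :
  f (obase H) = g (obase H) -> f = g.
Proof.
move=> fg; apply: gmap_ext => C; case: (orbit_gsact C) => x ->.
by rewrite !gfunE fg.
Qed.

Lemma orbit_gmap_surj (H K : {group gT}) (f : gmap (orbit H) (orbit K)) y :
  exists x, f x = y.
Proof.
case: (orbit_gsact y) => a ->; case: (orbit_gsact (f (obase H))) => b fb.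
by exists (gsact (obase H) (b^-1 * a)); rewrite gfunE fb -gsactM mulKVg.
Qed.

Section Stabilizer.
Variables (W : gset gT) (w0 : W).

Definition gstab_set := [set g : gT | gsact w0 g == w0].

Lemma gstab_group_set : group_set gstab_set.
Proof.
apply/group_setP; split; first by rewrite inE gsact1.
by move=> x y; rewrite !inE => /eqP hx /eqP hy; rewrite gsactM hx hy.
Qed.

Definition gstab : {group gT} := Group gstab_group_set.

Lemma gstab_rcoset x a : a \in gstab :* x -> gsact w0 a = gsact w0 x.
Proof. by rewrite mem_rcoset inE => /eqP E; rewrite -{1}(mulgKV x a) gsactM E. Qed.

Definition orbit_embed_fun (C : orbit gstab) : W := gsact w0 (repr (val C)).

Lemma orbit_embed_base x : orbit_embed_fun (gsact (obase gstab) x) = gsact w0 x.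
Proof. by rewrite /orbit_embed_fun /= rcoset1; apply/gstab_rcoset/mem_repr_rcoset. Qed.

Lemma orbit_embedE C g : orbit_embed_fun (gsact C g) = gsact (orbit_embed_fun C) g.
Proof. by case: (orbit_gsact C) => x ->; rewrite -gsactM !orbit_embed_base gsactM. Qed.

Definition orbit_embed : gmap (orbit gstab) W := GMap orbit_embedE.

Lemma orbit_embed_inj : injective orbit_embed.
Proof.
move=> C1 C2; case: (orbit_gsact C1) => x ->; case: (orbit_gsact C2) => y ->.
rewrite /= !orbit_embed_base => E.
have xy_stab : x * y^-1 \in gstab by rewrite inE gsactM E -gsactM mulgV gsact1.
by apply: val_inj; rewrite /= !rcoset1; apply/(@rcoset_eqP _ gstab); rewrite mem_rcoset.
Qed.

Definition in_orbit0 (w : W) := [exists g, w == gsact w0 g].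

Lemma in_orbit0_inv : ginvariant in_orbit0.
Proof.
move=> w g; apply/existsP/existsP => [[h /eqP E]|[h /eqP E]].
  by exists (h * g^-1); apply/eqP; rewrite gsactM -E -gsactM mulgV gsact1.
by exists (h * g); apply/eqP; rewrite gsactM E.
Qed.

Lemma notin_orbit0_inv : ginvariant (predC in_orbit0).
Proof. by move=> w g /=; rewrite in_orbit0_inv. Qed.

Definition orbit_compl := gsub notin_orbit0_inv.

Definition orbit_split_fun (u : gsum (orbit gstab) orbit_compl) : W :=
  match u with inl C => orbit_embed C | inr w => val w end.

Lemma orbit_splitE u g : orbit_split_fun (gsact u g) = gsact (orbit_split_fun u) g.
Proof. by case: u => [C|w] //=; rewrite orbit_embedE. Qed.

Definition orbit_split : gmap (gsum (orbit gstab) orbit_compl) W := GMap orbit_splitE.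

Lemma orbit_embed_in C : in_orbit0 (orbit_embed C).
Proof.
by case: (orbit_gsact C) => x ->; apply/existsP; exists x; rewrite /= orbit_embed_base.
Qed.

Lemma orbit_split_inj : injective orbit_split.
Proof.
move=> [C1|w1] [C2|w2] //= E.
- by rewrite (orbit_embed_inj E).
- by move: (valP w2); rewrite /= -E orbit_embed_in.
- by move: (valP w1); rewrite /= E orbit_embed_in.
- by congr inr; apply: val_inj.
Qed.

Lemma orbit_split_surj w : exists u, orbit_split u = w.
Proof.
have [/existsP [x /eqP ->]|w_out] := boolP (in_orbit0 w).
  by exists (inl (gsact (obase gstab) x)); rewrite /= orbit_embed_base.
by exists (inr (exist _ w w_out)).
Qed.

Lemma card_orbit_compl : #|orbit_compl| < #|W|.
Proof.
rewrite /= card_sig; apply: (@leq_ltn_trans #|predC1 w0|).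
  apply/subset_leq_card/subsetP => w; rewrite !inE; apply: contra => /eqP ->.
  by apply/existsP; exists 1; rewrite gsact1.
by rewrite cardC1; case: #|W| (max_card (pred1 w0)) => //; rewrite card1.
Qed.

End Stabilizer.

Lemma orbit_decomposition W (w0 : W) :
  exists S (W' : gset gT) (h : gmap (gsum (orbit S) W') W),
  [/\ injective h, forall w, exists u, h u = w, #|W'| < #|W|
    & forall C, exists x, h (inl C) = gsact w0 x].
Proof.
exists (gstab w0), (orbit_compl w0), (orbit_split w0); split.
- exact: orbit_split_inj.
- exact: orbit_split_surj.
- exact: card_orbit_compl.
- by move=> C; case: (orbit_gsact C) => x ->; exists x; rewrite /= orbit_embed_base.
Qed.

End Orbits.

Definition gfromempty X : gmap (gempty gT) X :=
  @GMap gT (gempty gT) X (fun v : void => match v with end) (fun v => match v with end).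

Section Coproducts.
Variables X Y : gset gT.

Lemma ginl_pullback : is_pullback (ginl X Y) (ginl X Y) (gid X) (gid X).
Proof. by split=> // x y [<-]; exists x; split=> // w []. Qed.

Lemma ginr_pullback : is_pullback (ginr X Y) (ginr X Y) (gid Y) (gid Y).
Proof. by split=> // x y [<-]; exists x; split=> // w []. Qed.

Lemma ginr_ginl_pullback :
  is_pullback (ginr X Y) (ginl X Y) (gfromempty Y) (gfromempty X).
Proof. by split=> [[]|]. Qed.

Lemma ginl_ginr_pullback :
  is_pullback (ginl X Y) (ginr X Y) (gfromempty X) (gfromempty Y).
Proof. by split=> [[]|]. Qed.

Section OrbitIntoSum.
Variables (M : {group gT}) (o : gmap (orbit M) (gsum X Y)).

Definition proj_inl (x0 : X) (C : orbit M) : X := if o C is inl x then x else x0.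
Definition proj_inr (y0 : Y) (C : orbit M) : Y := if o C is inr y then y else y0.

Lemma proj_inlK x0 : o (obase M) = inl x0 -> forall C, o C = inl (proj_inl x0 C).
Proof. by move=> E C; case: (orbit_gsact C) => g ->; rewrite /proj_inl gfunE E. Qed.

Lemma proj_inrK y0 : o (obase M) = inr y0 -> forall C, o C = inr (proj_inr y0 C).
Proof. by move=> E C; case: (orbit_gsact C) => g ->; rewrite /proj_inr gfunE E. Qed.

Lemma proj_inlE x0 (E : o (obase M) = inl x0) C g :
  proj_inl x0 (gsact C g) = gsact (proj_inl x0 C) g.
Proof. by have := proj_inlK E (gsact C g); rewrite gfunE (proj_inlK E C) => -[]. Qed.

Lemma proj_inrE y0 (E : o (obase M) = inr y0) C g :
  proj_inr y0 (gsact C g) = gsact (proj_inr y0 C) g.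
Proof. by have := proj_inrK E (gsact C g); rewrite gfunE (proj_inrK E C) => -[]. Qed.

Lemma orbit_gmap_sum :
  (exists o' : gmap (orbit M) X, o = gcomp (ginl X Y) o') \/
  (exists o' : gmap (orbit M) Y, o = gcomp (ginr X Y) o').
Proof.
case E: (o (obase M)) => [x0|y0].
  by left; exists (GMap (proj_inlE E)); apply: gmap_ext => C; rewrite (proj_inlK E).
by right; exists (GMap (proj_inrE E)); apply: gmap_ext => C; rewrite (proj_inrK E).
Qed.

End OrbitIntoSum.
End Coproducts.

Definition is_inl X Y (u : gsum X Y) := if u is inl _ then true else false.

Lemma is_inl_inv X Y : ginvariant (@is_inl X Y).
Proof. by case. Qed.

Section SumMap.
Variables (X1 X2 Y1 Y2 : gset gT) (f1 : gmap X1 Y1) (f2 : gmap X2 Y2).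

Definition gsmap_fun (u : gsum X1 X2) : gsum Y1 Y2 :=
  match u with inl a => inl (f1 a) | inr b => inr (f2 b) end.

Lemma gsmapE u g : gsmap_fun (gsact u g) = gsact (gsmap_fun u) g.
Proof. by case: u => [a|b] /=; rewrite gfunE. Qed.

Definition gsmap : gmap (gsum X1 X2) (gsum Y1 Y2) := GMap gsmapE.

Lemma gsmap_pullback_l : is_pullback gsmap (ginl Y1 Y2) (ginl X1 X2) f1.
Proof. by split=> // [[a|b] y] //= [E]; exists a; split=> // w [[->]]. Qed.

Lemma gsmap_pullback_r : is_pullback gsmap (ginr Y1 Y2) (ginr X1 X2) f2.
Proof. by split=> // [[a|b] y] //= [E]; exists b; split=> // w [[->]]. Qed.

End SumMap.

Definition codiag_fun X (u : gsum X X) : X := match u with inl x => x | inr x => x end.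

Lemma codiagE X u g : @codiag_fun X (gsact u g) = gsact (codiag_fun u) g.
Proof. by case: u. Qed.

Definition codiag X : gmap (gsum X X) X := GMap (@codiagE X).

Section ExponentialPoints.
Variables (A X Y : gset gT) (p : gmap A X) (f : gmap X Y).

Lemma exp_e_fibre (w : gpi p f) x : f x = (val w).1 ->
  exists v : gev p f, exp_e p f v = w /\ p (exp_ev p f v) = x.
Proof.
move=> fx; have [a [pa sx]] : exists a, p a = x /\ (val w).2 x = Some a.
  have := forallP (valP w) x; rewrite /= fx eqxx.
  by case: ((val w).2 x) => [a /eqP pa|//]; exists a.
have v_ok : ev_ok (a, w) by rewrite /ev_ok /= pa sx.
by exists (exist _ (a, w) v_ok).
Qed.

Lemma gpb_exp_e_point (good : pred A) M (o : gmap (orbit M) (gpi p f)) x :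
  f x = (val (o (obase M))).1 -> (forall a, p a = x -> good a) ->
  exists q : gpb o (exp_e p f), good (exp_ev p f (gpb_snd o (exp_e p f) q)).
Proof.
move=> fx good_x; case: (exp_e_fibre fx) => v [ev pv].
have q_ok : gpb_pred o (exp_e p f) (obase M, v) by apply/eqP; rewrite ev.
by exists (exist _ (obase M, v) q_ok); apply: good_x.
Qed.

End ExponentialPoints.

End GSetTheory.

Local Open Scope ring_scope.

Section TambaraTheory.
Variables (gT : finGroupType) (T : tambara gT).
Implicit Types X Y W : gset gT.

Lemma tR0 X Y (f : gmap X Y) : tR f 0 = 0 :> T X.
Proof. by case: (tR_rmorph T f). Qed.
Lemma tR1 X Y (f : gmap X Y) : tR f 1 = 1 :> T X.
Proof. by case: (tR_rmorph T f). Qed.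
Lemma tRD X Y (f : gmap X Y) (a b : T Y) : tR f (a + b) = tR f a + tR f b.
Proof. by case: (tR_rmorph T f). Qed.
Lemma tRM X Y (f : gmap X Y) (a b : T Y) : tR f (a * b) = tR f a * tR f b.
Proof. by case: (tR_rmorph T f). Qed.
Lemma tTr0 X Y (f : gmap X Y) : tTr f 0 = 0 :> T Y.
Proof. by case: (tTr_additive T f). Qed.
Lemma tTrD X Y (f : gmap X Y) (a b : T X) : tTr f (a + b) = tTr f a + tTr f b.
Proof. by case: (tTr_additive T f). Qed.
Lemma tN1 X Y (f : gmap X Y) : tN f 1 = 1 :> T Y.
Proof. by case: (tN_multiplicative T f). Qed.
Lemma tNM X Y (f : gmap X Y) (a b : T X) : tN f (a * b) = tN f a * tN f b.
Proof. by case: (tN_multiplicative T f). Qed.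

Lemma tRX X Y (f : gmap X Y) (a : T Y) n : tR f (a ^+ n) = tR f a ^+ n.
Proof. by elim: n => [|n IH]; rewrite ?tR1 // !exprS tRM IH. Qed.
Lemma tNX X Y (f : gmap X Y) (a : T X) n : tN f (a ^+ n) = tN f a ^+ n.
Proof. by elim: n => [|n IH]; rewrite ?tN1 // !exprS tNM IH. Qed.

Lemma tR_sum X Y (f : gmap X Y) n (a : 'I_n -> T Y) :
  tR f (\sum_(i < n) a i) = \sum_(i < n) tR f (a i).
Proof. by apply: big_morph; [exact: tRD | exact: tR0]. Qed.
Lemma tTr_sum X Y (f : gmap X Y) n (a : 'I_n -> T X) :
  tTr f (\sum_(i < n) a i) = \sum_(i < n) tTr f (a i).
Proof. by apply: big_morph; [exact: tTrD | exact: tTr0]. Qed.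

(* The identity of an empty [X] factors through [gempty]. *)
Lemma tempty_eq X : (X -> False) -> forall a b : T X, a = b.
Proof.
move=> X0 a b.
pose j : gmap X (gempty gT) :=
  @GMap gT X (gempty gT) (fun x => match X0 x with end) (fun x => match X0 x with end).
have idX : gid X = gcomp (gfromempty X) j by apply: gmap_ext => x; case: (X0 x).
by rewrite -(tR_id a) -(tR_id b) idX !tR_comp (tempty (tR (gfromempty X) a) (tR (gfromempty X) b)).
Qed.

Lemma tTr_empty X Y (f : gmap X Y) (z : T X) : (X -> False) -> tTr f z = 0.
Proof. by move=> X0; rewrite (tempty_eq X0 z 0) tTr0. Qed.
Lemma tN_empty X Y (f : gmap X Y) (z : T X) : (X -> False) -> tN f z = 1.
Proof. by move=> X0; rewrite (tempty_eq X0 z 1) tN1. Qed.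

Section Isomorphism.
Variables (X W : gset gT) (h : gmap X W).
Hypotheses (h_inj : injective h) (h_surj : forall w, exists x, h x = w).

Lemma ginv_ex w : exists x, h x == w.
Proof. by case: (h_surj w) => x <-; exists x. Qed.

Definition ginv_fun w := xchoose (ginv_ex w).

Lemma ginv_funK w : h (ginv_fun w) = w.
Proof. exact/eqP/(xchooseP (ginv_ex w)). Qed.

Lemma ginv_funE w g : ginv_fun (gsact w g) = gsact (ginv_fun w) g.
Proof. by apply: h_inj; rewrite gfunE !ginv_funK. Qed.

Definition ginv : gmap W X := GMap ginv_funE.

Lemma ginv_pullback : is_pullback ginv (gid X) h (gid X).
Proof.
split=> [x|w x /= E]; first by apply: h_inj; rewrite /= ginv_funK.
by exists x; split=> [|x' [_ <-]] //; rewrite -E ginv_funK.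
Qed.

Lemma gcomp_ginv Z (f : gmap W Z) : f = gcomp (gcomp f h) ginv.
Proof. by apply: gmap_ext => w /=; rewrite ginv_funK. Qed.

Lemma tTr_iso Z (f : gmap W Z) (z : T W) : tTr f z = tTr (gcomp f h) (tR h z).
Proof.
rewrite {1}(gcomp_ginv f) tTr_comp; congr tTr.
by have := tBC_Tr ginv_pullback z; rewrite tR_id tTr_id.
Qed.

Lemma tN_iso Z (f : gmap W Z) (z : T W) : tN f z = tN (gcomp f h) (tR h z).
Proof.
rewrite {1}(gcomp_ginv f) tN_comp; congr tN.
by have := tBC_N ginv_pullback z; rewrite tR_id tN_id.
Qed.

End Isomorphism.

Section Coproduct.
Variables X Y : gset gT.

Lemma tsum_inj (c d : T (gsum X Y)) :
  tR (ginl X Y) c = tR (ginl X Y) d -> tR (ginr X Y) c = tR (ginr X Y) d -> c = d.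
Proof.
by case: (tcoprod T X Y) => pair pairK _ El Er; rewrite -(pairK c) -(pairK d) El Er.
Qed.

Lemma tsum_pair (a : T X) (b : T Y) :
  exists c : T (gsum X Y), tR (ginl X Y) c = a /\ tR (ginr X Y) c = b.
Proof. by case: (tcoprod T X Y) => pair _ pairK; exists (pair (a, b)); case: (pairK (a, b)). Qed.

Lemma tsum_decTr (c : T (gsum X Y)) :
  c = tTr (ginl X Y) (tR (ginl X Y) c) + tTr (ginr X Y) (tR (ginr X Y) c).
Proof.
apply: tsum_inj; rewrite tRD.
- rewrite (tBC_Tr (ginl_pullback X Y)) (tBC_Tr (ginr_ginl_pullback X Y)).
  by rewrite tR_id tTr_id tTr_empty ?addr0 //; case.
- rewrite (tBC_Tr (ginr_pullback X Y)) (tBC_Tr (ginl_ginr_pullback X Y)).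
  by rewrite tR_id tTr_id tTr_empty ?add0r //; case.
Qed.

Lemma tsum_decN (c : T (gsum X Y)) :
  c = tN (ginl X Y) (tR (ginl X Y) c) * tN (ginr X Y) (tR (ginr X Y) c).
Proof.
apply: tsum_inj; rewrite tRM.
- rewrite (tBC_N (ginl_pullback X Y)) (tBC_N (ginr_ginl_pullback X Y)).
  by rewrite tR_id tN_id tN_empty ?mulr1 //; case.
- rewrite (tBC_N (ginr_pullback X Y)) (tBC_N (ginl_ginr_pullback X Y)).
  by rewrite tR_id tN_id tN_empty ?mul1r //; case.
Qed.

Lemma tTr_gsum Z (f : gmap (gsum X Y) Z) (c : T (gsum X Y)) :
  tTr f c = tTr (gcomp f (ginl X Y)) (tR (ginl X Y) c)
          + tTr (gcomp f (ginr X Y)) (tR (ginr X Y) c).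
Proof. by rewrite {1}(tsum_decTr c) tTrD !tTr_comp. Qed.

Lemma tN_gsum Z (f : gmap (gsum X Y) Z) (c : T (gsum X Y)) :
  tN f c = tN (gcomp f (ginl X Y)) (tR (ginl X Y) c)
         * tN (gcomp f (ginr X Y)) (tR (ginr X Y) c).
Proof. by rewrite {1}(tsum_decN c) tNM !tN_comp. Qed.

End Coproduct.

Lemma gcomp_codiag_inl X : gcomp (codiag X) (ginl X X) = gid X.
Proof. exact: gmap_ext. Qed.
Lemma gcomp_codiag_inr X : gcomp (codiag X) (ginr X X) = gid X.
Proof. exact: gmap_ext. Qed.

Lemma tTr_codiag X (c : T (gsum X X)) :
  tTr (codiag X) c = tR (ginl X X) c + tR (ginr X X) c.
Proof. by rewrite tTr_gsum gcomp_codiag_inl gcomp_codiag_inr !tTr_id. Qed.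

Lemma tN_codiag X (c : T (gsum X X)) :
  tN (codiag X) c = tR (ginl X X) c * tR (ginr X X) c.
Proof. by rewrite tN_gsum gcomp_codiag_inl gcomp_codiag_inr !tN_id. Qed.

Lemma tN_codiag_tTr X1 X2 Y (f1 : gmap X1 Y) (f2 : gmap X2 Y) (c : T (gsum X1 X2)) :
  tN (codiag Y) (tTr (gsmap f1 f2) c)
  = tTr f1 (tR (ginl X1 X2) c) * tTr f2 (tR (ginr X1 X2) c).
Proof.
by rewrite tN_codiag (tBC_Tr (gsmap_pullback_l f1 f2)) (tBC_Tr (gsmap_pullback_r f1 f2)).
Qed.

End TambaraTheory.

Section Orbitwise.
Variables (gT : finGroupType) (T : tambara gT).
Implicit Types (X Y W : gset gT) (P U V : tfam T).

Definition tadd_closed U :=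
  (forall M, U M 0) /\ (forall M a b, U M a -> U M b -> U M (a + b)).
Definition tabsorbing V := forall M c v, V M v -> V M (c * v).
Definition tTr_into P U :=
  forall M K (g : gmap (orbit M) (orbit K)) a, P M a -> U K (tTr g a).
Definition tN_into P V :=
  forall M K (g : gmap (orbit M) (orbit K)) a, P M a -> V K (tN g a).

Definition orbitwise P X (z : T X) := forall M (o : gmap (orbit M) X), P M (tR o z).
Definition orbitwise_on P X (good : pred X) (z : T X) :=
  forall M (o : gmap (orbit M) X), good (o (obase M)) -> P M (tR o z).

(* Makes every section of [p] over a fibre of [f] pass through a good point. *)
Definition fibre_good W X Y (p : gmap W X) (f : gmap X Y) (good : pred W) :=
  forall y, exists2 x, f x = y & forall w, p w = x -> good w.

Lemma fibre_good_inl X1 X2 Y (f1 : gmap X1 Y) (f2 : gmap X2 Y) :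
  fibre_good (gsmap f1 f2) (codiag Y) (@is_inl _ X1 X2).
Proof. by move=> y; exists (inl y) => // -[]. Qed.

Lemma fibre_good_inr X1 X2 Y (f1 : gmap X1 Y) (f2 : gmap X2 Y) :
  fibre_good (gsmap f1 f2) (codiag Y) (predC (@is_inl _ X1 X2)).
Proof. by move=> y; exists (inr y) => // -[]. Qed.

Lemma orbitwise_tR P X X' (q : gmap X' X) (z : T X) :
  orbitwise P z -> orbitwise P (tR q z).
Proof. by move=> Pz M o; rewrite -tR_comp. Qed.

(* [0] is a transfer from the empty G-set, whose dependent product along a
   surjection is empty. *)
Lemma tN0 X Y (g : gmap X Y) : (forall y, exists x, g x = y) -> tN g 0 = 0 :> T Y.
Proof.
move=> g_surj; rewrite -(tTr0 T (gfromempty X)) tdistr tTr_empty // => w.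
case: (g_surj (val w).1) => x /exp_e_fibre [v _].
by case: (exp_ev (gfromempty X) g v).
Qed.

Lemma tTr_orbitwise P U : tadd_closed U -> tTr_into P U ->
  forall W K (f : gmap W (orbit K)) (z : T W), orbitwise P z -> U K (tTr f z).
Proof.
move=> [U0 UD] UTr W K f z; have [n] := ubnP #|W|.
elim: n W K f z => // n IH W K f z cardW Pz.
case: (pickP (@predT W)) => [w0 _|W0]; last first.
  by rewrite tTr_empty ?U0 // => w; have := W0 w.
case: (orbit_decomposition w0) => S [W' [h [h_inj h_surj cardW' _]]].
rewrite (tTr_iso h_inj h_surj) tTr_gsum -!tR_comp; apply: UD; first exact/UTr/Pz.
by apply: IH; [exact: leq_trans cardW' _ | apply: orbitwise_tR].
Qed.

Lemma tN_orbitwise P V : tabsorbing V -> tN_into P V ->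
  forall W (good : pred W), ginvariant good -> forall w0, good w0 ->
  forall K (f : gmap W (orbit K)) (z : T W), orbitwise_on P good z -> V K (tN f z).
Proof.
move=> Vabs VN W good good_inv w0 good_w0 K f z Pz.
case: (orbit_decomposition w0) => S [W' [h [h_inj h_surj _ h_orbit]]].
rewrite (tN_iso h_inj h_surj) tN_gsum mulrC -!tR_comp; apply/Vabs/VN/Pz.
by case: (h_orbit (obase S)) => x /= ->; rewrite good_inv.
Qed.

Lemma tN_orbitwise2 P1 P2 V1 V2 V : tabsorbing V2 ->
  (forall M a b, V1 M a -> V2 M b -> V M (a * b)) -> tN_into P1 V1 -> tN_into P2 V2 ->
  forall W (good : pred W), ginvariant good -> forall w1 w2, good w1 -> ~~ good w2 ->
  forall K (f : gmap W (orbit K)) (z : T W),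
  orbitwise_on P1 good z -> orbitwise_on P2 (predC good) z -> V K (tN f z).
Proof.
move=> V2abs V12 VN1 VN2 W good good_inv w1 w2 good_w1 bad_w2 K f z P1z P2z.
case: (orbit_decomposition w1) => S [W' [h [h_inj h_surj _ h_orbit]]].
rewrite (tN_iso h_inj h_surj) tN_gsum -!tR_comp; apply: V12.
  apply/VN1/P1z; by case: (h_orbit (obase S)) => x /= ->; rewrite good_inv.
case: (h_surj w2) => [[C|w2']] hw2.
  by case: (h_orbit C) => x hC; move: bad_w2; rewrite -hw2 hC good_inv good_w1.
apply: (@tN_orbitwise _ _ V2abs VN2 _ (fun w => ~~ good (h (inr w))) _ w2').
- by move=> w g; rewrite -[inr _]/(gsact (inr w : gsum _ _) g) gfunE good_inv.
- by rewrite hw2.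
- by move=> M o /= bad; rewrite -!tR_comp; apply: P2z.
Qed.

Lemma tN_tTr_orbitwise P V U : tabsorbing V -> tN_into P V ->
  tadd_closed U -> tTr_into V U ->
  forall W X K (p : gmap W X) (f : gmap X (orbit K)) (good : pred W),
  ginvariant good -> fibre_good p f good ->
  forall w : T W, orbitwise_on P good w -> U K (tN f (tTr p w)).
Proof.
move=> Vabs VN Uadd UTr W X K p f good good_inv fgood w Pw.
rewrite tdistr; apply: (tTr_orbitwise Uadd UTr) => M o.
rewrite (tBC_N (gpb_pullback o (exp_e p f))).
case: (fgood (val (o (obase M))).1) => x fx good_x.
case: (gpb_exp_e_point fx good_x) => q0 good_q0.
pose good' q := good (exp_ev p f (gpb_snd o (exp_e p f) q)).
apply: (@tN_orbitwise _ _ Vabs VN _ good' _ q0 good_q0) => [q g|M' q good_q].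
  by rewrite /good' !gfunE good_inv.
by rewrite -!tR_comp; apply: Pw.
Qed.

Lemma tN_tTr_orbitwise_orbit P V U : tabsorbing V -> tN_into P V ->
  tadd_closed U -> tTr_into V U ->
  forall W M K (p : gmap W (orbit M)) (g : gmap (orbit M) (orbit K)) (w : T W),
  orbitwise P w -> U K (tN g (tTr p w)).
Proof.
move=> Vabs VN Uadd UTr W M K p g w Pw.
apply: (@tN_tTr_orbitwise _ _ _ Vabs VN Uadd UTr _ _ _ _ _ predT) => //.
by move=> y; case: (orbit_gmap_surj g y) => x gx; exists x.
Qed.

Lemma tN_tTr_orbitwise2 P1 P2 V1 V2 V U : tabsorbing V2 ->
  (forall M a b, V1 M a -> V2 M b -> V M (a * b)) -> tN_into P1 V1 -> tN_into P2 V2 ->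
  tadd_closed U -> tTr_into V U ->
  forall W X K (p : gmap W X) (f : gmap X (orbit K)) (good : pred W),
  ginvariant good -> fibre_good p f good -> fibre_good p f (predC good) ->
  forall w : T W, orbitwise_on P1 good w -> orbitwise_on P2 (predC good) w ->
  U K (tN f (tTr p w)).
Proof.
move=> V2abs V12 VN1 VN2 Uadd UTr W X K p f good good_inv fgood fbad w P1w P2w.
rewrite tdistr; apply: (tTr_orbitwise Uadd UTr) => M o.
rewrite (tBC_N (gpb_pullback o (exp_e p f))).
case: (fgood (val (o (obase M))).1) => x1 fx1 good_x1.
case: (fbad (val (o (obase M))).1) => x2 fx2 bad_x2.
case: (gpb_exp_e_point fx1 good_x1) => q1 good_q1.
case: (gpb_exp_e_point fx2 bad_x2) => q2 bad_q2.
pose good' q := good (exp_ev p f (gpb_snd o (exp_e p f) q)).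
apply: (@tN_orbitwise2 _ _ _ _ _ V2abs V12 VN1 VN2 _ good' _ q1 q2 good_q1 bad_q2)
  => [q g|M' q|M' q] /=.
- by rewrite /good' !gfunE good_inv.
- by move=> good_q; rewrite -!tR_comp; apply: P1w.
- by move=> bad_q; rewrite -!tR_comp; apply: P2w.
Qed.

End Orbitwise.

Section TambaraIdeals.
Variables (gT : finGroupType) (T : tambara gT).
Implicit Types (I J : tfam T) (H K M : {group gT}).

Section IdealProperties.
Variable I : tfam T.
Arguments I : clear implicits.
Hypothesis I_ideal : is_tideal I.

Lemma tideal0 M : I M 0.
Proof. by case: I_ideal. Qed.
Lemma tidealD M a b : I M a -> I M b -> I M (a + b).
Proof. by case: I_ideal => _ ID _ _ _; apply: ID. Qed.
Lemma tidealMl M a b : I M b -> I M (a * b).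
Proof. by case: I_ideal => _ _ IM _ _; apply: IM. Qed.
Lemma tidealMr M a b : I M a -> I M (a * b).
Proof. by rewrite mulrC; apply: tidealMl. Qed.
Lemma tidealR M K (f : gmap (orbit M) (orbit K)) a : I K a -> I M (tR f a).
Proof. by case: I_ideal => _ _ _ IR _; apply: IR. Qed.
Lemma tidealTr M K (f : gmap (orbit M) (orbit K)) a : I M a -> I K (tTr f a).
Proof. by case: I_ideal => _ _ _ _ ITN /(ITN _ _ f)[]. Qed.
Lemma tidealN M K (f : gmap (orbit M) (orbit K)) a : I M a -> I K (tN f a).
Proof. by case: I_ideal => _ _ _ _ ITN /(ITN _ _ f)[]. Qed.

Lemma tideal_add_closed : tadd_closed I.
Proof. by split; [apply: tideal0 | apply: tidealD]. Qed.

End IdealProperties.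

Lemma tidealP I :
  tadd_closed I -> tabsorbing I ->
  (forall M K (f : gmap (orbit M) (orbit K)) a, I K a -> I M (tR f a)) ->
  tTr_into I I -> tN_into I I -> is_tideal I.
Proof. by move=> [I0 ID] IM IR ITr IN; split=> // M K f a Ia; split; [apply: ITr | apply: IN]. Qed.

Lemma tcap_tideal L (I : L -> tfam T) : (forall l, is_tideal (I l)) -> is_tideal (tcap I).
Proof.
move=> I_ideal; apply: tidealP; first split.
- by move=> M l; apply: tideal0.
- by move=> M a b Ia Ib l; apply: tidealD.
- by move=> M c v Iv l; apply: tidealMl.
- by move=> M K f a Ia l; apply: tidealR.
- by move=> M K f a Ia l; apply: tidealTr.
- by move=> M K f a Ia l; apply: tidealN.
Qed.

Lemma tmeet_tideal I J : is_tideal I -> is_tideal J -> is_tideal (tmeet I J).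
Proof.
move=> I_ideal J_ideal; apply: tidealP; first split.
- by move=> M; split; apply: tideal0.
- by move=> M a b [Ia Ja] [Ib Jb]; split; apply: tidealD.
- by move=> M c v [Iv Jv]; split; apply: tidealMl.
- by move=> M K f a [Ia Ja]; split; apply: tidealR.
- by move=> M K f a [Ia Ja]; split; apply: tidealTr.
- by move=> M K f a [Ia Ja]; split; apply: tidealN.
Qed.

Lemma tgen1_tideal H (x : T (orbit H)) : is_tideal (tgen1 x).
Proof.
apply: tidealP; first split.
- by move=> M J J_ideal _; exact: tideal0 J_ideal _.
- by move=> M a b Ia Ib J J_ideal Jx; apply: (tidealD J_ideal); [apply: Ia | apply: Ib].
- by move=> M c v Iv J J_ideal Jx; apply: (tidealMl J_ideal); apply: Iv.
- by move=> M K f a Ia J J_ideal Jx; apply: (tidealR J_ideal); apply: Ia.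
- by move=> M K f a Ia J J_ideal Jx; apply: (tidealTr J_ideal); apply: Ia.
- by move=> M K f a Ia J J_ideal Jx; apply: (tidealN J_ideal); apply: Ia.
Qed.

Lemma tgen1_self H (x : T (orbit H)) : tgen1 x x.
Proof. by move=> J _. Qed.

Lemma tgen1_min H (x : T (orbit H)) I : is_tideal I -> I H x -> tsub (tgen1 x) I.
Proof. by move=> I_ideal Ix M y; apply. Qed.

Definition tTr_closure (P : tfam T) : tfam T := fun M z =>
  forall F, tadd_closed F -> tTr_into F F -> tsub P F -> F M z.

Lemma tTr_closure_add_closed P : tadd_closed (tTr_closure P).
Proof.
split=> [M F [F0 _] //|M a b Pa Pb F Fadd FTr PF].
by case: (Fadd) => _ FD; exact: FD _ _ _ (Pa F Fadd FTr PF) (Pb F Fadd FTr PF).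
Qed.

Lemma tTr_closure_tTr_into P : tTr_into (tTr_closure P) (tTr_closure P).
Proof. by move=> M K g a Pa F Fadd FTr PF; exact: FTr _ _ _ _ (Pa F Fadd FTr PF). Qed.

Lemma sub_tTr_closure P : tsub P (tTr_closure P).
Proof. by move=> M z Pz F _ _ PF; apply: PF. Qed.

Lemma tTr_closure_min P F :
  tadd_closed F -> tTr_into F F -> tsub P F -> tsub (tTr_closure P) F.
Proof. by move=> Fadd FTr PF M z; apply. Qed.

Section LevelwiseSum.
Variables (L : Type) (I : L -> tfam T).
Arguments I : clear implicits.
Hypothesis I_ideal : forall l, is_tideal (I l).

Lemma tsumfam_sub l : tsub (I l) (tsumfam I).
Proof. by move=> M y Iy; exists 1%N, (fun _ => l), (fun _ => y); rewrite big_ord1. Qed.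

Lemma tsumfam_add_closed : tadd_closed (tsumfam I).
Proof.
split=> [M|M _ _ [n1 [l1 [a1 [Ia1 ->]]]] [n2 [l2 [a2 [Ia2 ->]]]]].
  have no_index : 'I_0 -> L by case=> m; rewrite ltn0.
  by exists 0%N, no_index, (fun _ => 0); split=> [[m]|]; rewrite ?ltn0 ?big_ord0.
exists (n1 + n2)%N, (fun i => match split i with inl j => l1 j | inr j => l2 j end),
  (fun i => match split i with inl j => a1 j | inr j => a2 j end).
split=> [i|]; first by case: (split i).
rewrite big_split_ord; congr (_ + _); apply: eq_bigr => i _.
  by rewrite (unsplitK (inl i : 'I_n1 + 'I_n2)).
by rewrite (unsplitK (inr i : 'I_n1 + 'I_n2)).
Qed.

Lemma tsumfam_absorbing : tabsorbing (tsumfam I).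
Proof.
move=> M c _ [n [l [a [Ia ->]]]]; exists n, l, (fun i => c * a i).
by rewrite mulr_sumr; split=> // i; apply: tidealMl.
Qed.

Lemma tsumfamR M K (f : gmap (orbit M) (orbit K)) (y : T (orbit K)) :
  tsumfam I y -> tsumfam I (tR f y).
Proof.
case=> n [l [a [Ia ->]]]; exists n, l, (fun i => tR f (a i)).
by rewrite tR_sum; split=> // i; apply: tidealR.
Qed.

Lemma tsumfam_tTr_into : tTr_into (tsumfam I) (tsumfam I).
Proof.
move=> M K f _ [n [l [a [Ia ->]]]]; exists n, l, (fun i => tTr f (a i)).
by rewrite tTr_sum; split=> // i; apply: tidealTr.
Qed.

(* Induction on the number of summands: a sum of n + 1 terms is a transfer
   along the codiagonal, and the distributive law expands its norm. *)
Lemma tsumfam_tN_sum n : forall M K (g : gmap (orbit M) (orbit K))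
    (l : 'I_n -> L) (a : 'I_n -> T (orbit M)),
  (forall i, I (l i) M (a i)) -> tsumfam I (tN g (\sum_(i < n) a i)).
Proof.
elim: n => [|n IH] M K g l a Ia.
  by rewrite big_ord0 tN0; [case: tsumfam_add_closed | apply: orbit_gmap_surj].
rewrite big_ord_recl; set b := \sum_(i < n) _.
case: (tsum_pair (a ord0) b) => c [ca cb]; rewrite -ca -cb -tTr_codiag.
pose P M' z := I (l ord0) M' z \/
  forall K' (g' : gmap (orbit M') (orbit K')), tsumfam I (tN g' z).
apply: (@tN_tTr_orbitwise_orbit _ _ P) => //.
- exact: tsumfam_absorbing.
- move=> M' K' g' z [Iz|Sz]; last exact: Sz.
  by apply: (@tsumfam_sub (l ord0)); apply: tidealN.
- exact: tsumfam_add_closed.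
- exact: tsumfam_tTr_into.
- move=> M' o; case: (orbit_gmap_sum o) => -[o' ->]; rewrite tR_comp.
    by left; rewrite ca; apply: tidealR.
  right=> K' g'; rewrite cb tR_sum.
  by apply: (IH _ _ _ (fun i => l (lift ord0 i))) => i; apply: tidealR.
Qed.

Lemma tsumfam_tideal : is_tideal (tsumfam I).
Proof.
apply: tidealP.
- exact: tsumfam_add_closed.
- exact: tsumfam_absorbing.
- exact: tsumfamR.
- exact: tsumfam_tTr_into.
- by move=> M K f _ [n [l [a [Ia ->]]]]; apply: tsumfam_tN_sum Ia.
Qed.

End LevelwiseSum.

End TambaraIdeals.

Section MonomialIdeal.
Variables (gT : finGroupType) (T : tambara gT) (H0 : {group gT}) (x : T (orbit H0)).
Implicit Types (M K : {group gT}) (P F : tfam T).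

Record monomial M := Monomial {
  mono_lvl : {group gT};
  mono_nm : gmap (orbit mono_lvl) (orbit M);
  mono_res : gmap (orbit mono_lvl) (orbit H0) }.

Definition mono_val M (d : monomial M) : T (orbit M) := tN (mono_nm d) (tR (mono_res d) x).

Definition monmul (j : nat) : tfam T := fun M z =>
  exists (c : T (orbit M)) (s : seq (monomial M)),
    (j <= size s)%N /\ z = c * \prod_(d <- s) mono_val d.

Definition monideal (j : nat) : tfam T := tTr_closure (monmul j).

Lemma monmul_absorbing j : tabsorbing (monmul j).
Proof. by move=> M c _ [c' [s [js ->]]]; exists (c * c'), s; rewrite mulrA. Qed.

Lemma monmulM j k M (z1 z2 : T (orbit M)) :
  monmul j z1 -> monmul k z2 -> monmul (j + k) (z1 * z2).
Proof.
case=> c1 [s1 [js1 ->]] [c2 [s2 [ks2 ->]]]; exists (c1 * c2), (s1 ++ s2).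
by rewrite size_cat leq_add // big_cat mulrACA.
Qed.

Lemma monmul_mono M (d : monomial M) : monmul 1 (mono_val d).
Proof. by exists 1, [:: d]; rewrite big_seq1 mul1r. Qed.

Lemma monmul_x : monmul 1 x.
Proof.
by have := monmul_mono (Monomial (gid (orbit H0)) (gid (orbit H0))); rewrite /mono_val tR_id tN_id.
Qed.

Lemma monmul_tN_into j : tN_into (monmul j) (monmul j).
Proof.
move=> M K g _ [c [s [js ->]]].
exists (tN g c), [seq Monomial (gcomp g (mono_nm d)) (mono_res d) | d <- s].
rewrite size_map tNM big_map (big_morph (tN g) (tNM g) (tN1 T g)); split=> //.
by congr (_ * _); apply: eq_bigr => d _; rewrite /mono_val /= tN_comp.
Qed.

(* Beck-Chevalley writes the restriction of a monomial as a norm over a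
   pullback; its orbit through the base point contributes one monomial. *)
Lemma monmul_tR_mono M K (o : gmap (orbit M) (orbit K)) (d : monomial K) :
  monmul 1 (tR o (mono_val d)).
Proof.
case: d => M' b c; rewrite /mono_val /= (tBC_N (gpb_pullback o b)).
case: (orbit_gmap_surj b (o (obase M))) => y by_.
have q_ok : gpb_pred o b (obase M, y) by rewrite /gpb_pred /= by_.
pose q0 : gpb o b := exist (gpb_pred o b) (obase M, y) q_ok.
pose P M1 (z : T (orbit M1)) := exists g : gmap (orbit M1) (orbit H0), z = tR g x.
apply: (@tN_orbitwise _ _ P _ (@monmul_absorbing 1) _ _ predT _ q0) => //.
- by move=> M1 K1 g1 _ [g2 ->]; apply: (monmul_mono (Monomial g1 g2)).
- by move=> M1 q _; exists (gcomp c (gcomp (gpb_snd o b) q)); rewrite !tR_comp.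
Qed.

Lemma monmulR j M K (o : gmap (orbit M) (orbit K)) (z : T (orbit K)) :
  monmul j z -> monmul j (tR o z).
Proof.
case=> c [s [js ->]]; rewrite tRM (big_morph (tR o) (tRM o) (tR1 T o)).
apply: monmul_absorbing; elim: s j js => [|d s IH] [|j] //= js.
- by exists 1, [::]; rewrite !big_nil mulr1.
- by exists (\prod_(d0 <- d :: s) tR o (mono_val d0)), [::]; rewrite big_nil mulr1.
- by rewrite big_cons -add1n; apply: monmulM; [apply: monmul_tR_mono | apply: IH].
Qed.

Lemma monideal_add_closed j : tadd_closed (monideal j).
Proof. exact: tTr_closure_add_closed. Qed.

Lemma monideal_tTr_into j : tTr_into (monideal j) (monideal j).
Proof. exact: tTr_closure_tTr_into. Qed.

Lemma monmul_sub j : tsub (monmul j) (monideal j).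
Proof. exact: sub_tTr_closure. Qed.

Lemma monmul_tTr_into j : tTr_into (monmul j) (monideal j).
Proof. by move=> M K g a /monmul_sub; apply: monideal_tTr_into. Qed.

Lemma orbitwise_on_inl j M Y (a : T (orbit M)) (c : T (gsum (orbit M) Y)) :
  monmul j a -> tR (ginl (orbit M) Y) c = a ->
  orbitwise_on (monmul j) (@is_inl _ (orbit M) Y) c.
Proof.
move=> ja ca M' o; case: (orbit_gmap_sum o) => -[o' ->] //= _.
by rewrite tR_comp ca; apply: monmulR.
Qed.

Lemma orbitwise_on_inr j M X (b : T (orbit M)) (c : T (gsum X (orbit M))) :
  monmul j b -> tR (ginr X (orbit M)) c = b ->
  orbitwise_on (monmul j) (predC (@is_inl _ X (orbit M))) c.
Proof.
move=> jb cb M' o; case: (orbit_gmap_sum o) => -[o' ->] //= _.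
by rewrite tR_comp cb; apply: monmulR.
Qed.

Lemma monideal_ind j F :
  tadd_closed F -> tTr_into F F -> tsub (monmul j) F -> tsub (monideal j) F.
Proof. exact: tTr_closure_min. Qed.

Lemma monideal0 j M : monideal j (0 : T (orbit M)).
Proof. by case: (monideal_add_closed j). Qed.

Lemma monidealD j M (a b : T (orbit M)) :
  monideal j a -> monideal j b -> monideal j (a + b).
Proof. by case: (monideal_add_closed j) => _; apply. Qed.

Lemma monideal_mulr_tTr j M K (g : gmap (orbit M) (orbit K)) (p : T (orbit M)) c :
  monmul j p -> monideal j (c * tTr g p).
Proof.
move=> jp; case: (tsum_pair p c) => c0 [c0p c0c].
have -> : c * tTr g p = tN (codiag (orbit K)) (tTr (gsmap g (gid (orbit K))) c0).
  by rewrite tN_codiag_tTr tTr_id c0p c0c mulrC.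
apply: (@tN_tTr_orbitwise _ _ _ _ _ (@monmul_absorbing j) (@monmul_tN_into j)
  (monideal_add_closed j) (@monmul_tTr_into j)).
- exact: is_inl_inv.
- exact: fibre_good_inl.
- exact: orbitwise_on_inl jp c0p.
Qed.

Lemma monideal_absorbing j : tabsorbing (monideal j).
Proof.
suff absorb_tTr : tsub (monideal j) (fun M z =>
    forall K (g : gmap (orbit M) (orbit K)) c, monideal j (c * tTr g z)).
  by move=> M c z /absorb_tTr /(_ M (gid _) c); rewrite tTr_id.
apply: monideal_ind; first split.
- by move=> M K g c; rewrite tTr0 mulr0; apply: monideal0.
- by move=> M a b Fa Fb K g c; rewrite tTrD mulrDr; apply: monidealD.
- by move=> M1 K1 g1 a Fa K g c; rewrite -tTr_comp; apply: Fa.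
- by move=> M1 a ja K g c; apply: monideal_mulr_tTr.
Qed.

Lemma monidealR j M K (o : gmap (orbit M) (orbit K)) (z : T (orbit K)) :
  monideal j z -> monideal j (tR o z).
Proof.
suff R_closed : tsub (monideal j) (fun K z =>
    forall M (o : gmap (orbit M) (orbit K)), monideal j (tR o z)).
  by move/R_closed; apply.
apply: monideal_ind; first split.
- by move=> K' M' o'; rewrite tR0; apply: monideal0.
- by move=> K' a b Fa Fb M' o'; rewrite tRD; apply: monidealD.
- move=> M1 K1 g1 a Fa M' o'; rewrite (tBC_Tr (gpb_pullback o' g1)).
  apply: (tTr_orbitwise (monideal_add_closed j) (@monideal_tTr_into j)) => M2 q.
  by rewrite -tR_comp; apply: Fa.
- by move=> K' a ja M' o'; apply: monmul_sub; apply: monmulR.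
Qed.

Definition monideal_normed j : tfam T := fun M z =>
  forall M' (o : gmap (orbit M') (orbit M)),
  monideal j (tR o z) /\ forall K (g : gmap (orbit M') (orbit K)), monideal j (tN g (tR o z)).

Lemma monideal_normedR j M K (o : gmap (orbit M) (orbit K)) (z : T (orbit K)) :
  monideal_normed j z -> monideal_normed j (tR o z).
Proof. by move=> Nz M' o'; rewrite -tR_comp; apply: Nz. Qed.

Lemma monideal_normed_tN_into j : tN_into (monideal_normed j) (monideal j).
Proof. by move=> M K g z /(_ M (gid _)) [_]; rewrite tR_id; apply. Qed.

Lemma monideal_normed_tN_tTr j W M K (p : gmap W (orbit M)) (g : gmap (orbit M) (orbit K))
    (w : T W) :
  orbitwise (monideal_normed j) w -> monideal j (tN g (tTr p w)).
Proof.
apply: (tN_tTr_orbitwise_orbit (@monideal_absorbing j) (@monideal_normed_tN_into j)).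
- exact: monideal_add_closed.
- exact: monideal_tTr_into.
Qed.

Lemma monideal_normed_add_closed j : tadd_closed (monideal_normed j).
Proof.
split=> [M M' o|M a b Na Nb M' o].
  rewrite tR0; split=> [|K g]; first exact: monideal0.
  by rewrite tN0; [apply: monideal0 | apply: orbit_gmap_surj].
rewrite tRD; split=> [|K g]; first by apply: monidealD; [case: (Na M' o) | case: (Nb M' o)].
case: (tsum_pair (tR o a) (tR o b)) => c [ca cb]; rewrite -ca -cb -tTr_codiag.
apply: monideal_normed_tN_tTr => M2 o2.
case: (orbit_gmap_sum o2) => -[o' ->]; rewrite tR_comp ?ca ?cb;
  by apply: monideal_normedR; apply: monideal_normedR.
Qed.

Lemma monideal_normed_tTr_into j : tTr_into (monideal_normed j) (monideal_normed j).
Proof.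
move=> M1 K1 h a Na M' o; split=> [|K g].
  by apply: monidealR; apply: monideal_tTr_into; have := (Na M1 (gid _)).1; rewrite tR_id.
rewrite (tBC_Tr (gpb_pullback o h)); apply: monideal_normed_tN_tTr => M2 q.
by rewrite -tR_comp; apply: monideal_normedR.
Qed.

Lemma monideal_sub_normed j : tsub (monideal j) (monideal_normed j).
Proof.
apply: monideal_ind.
- exact: monideal_normed_add_closed.
- exact: monideal_normed_tTr_into.
- move=> M a ja M' o; split=> [|K g]; apply: monmul_sub.
    exact: monmulR.
  by apply: monmul_tN_into; apply: monmulR.
Qed.

Lemma monideal_tN_into j : tN_into (monideal j) (monideal j).
Proof.
by move=> M K g z /monideal_sub_normed; apply: monideal_normed_tN_into.
Qed.

Lemma monideal_tideal j : is_tideal (monideal j).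
Proof.
apply: tidealP.
- exact: monideal_add_closed.
- exact: monideal_absorbing.
- exact: monidealR.
- exact: monideal_tTr_into.
- exact: monideal_tN_into.
Qed.

Lemma monideal_tTr_mul j M M1 K (g : gmap (orbit M) (orbit K))
    (g1 : gmap (orbit M1) (orbit K)) (p : T (orbit M)) (q : T (orbit M1)) :
  monmul j p -> monmul 1 q -> monideal j.+1 (tTr g p * tTr g1 q).
Proof.
move=> jp q1; case: (tsum_pair p q) => c [cp cq]; rewrite -cp -cq -tN_codiag_tTr.
apply: (@tN_tTr_orbitwise2 _ _ _ _ _ _ _ _ (@monmul_absorbing 1) _
  (@monmul_tN_into j) (@monmul_tN_into 1) (monideal_add_closed j.+1) (@monmul_tTr_into j.+1)).
- by move=> M' a b ja b1; rewrite -addn1; apply: monmulM.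
- exact: is_inl_inv.
- exact: fibre_good_inl.
- exact: fibre_good_inr.
- exact: orbitwise_on_inl jp cp.
- exact: orbitwise_on_inr q1 cq.
Qed.

Lemma monideal_mul_monmul j M1 (p : T (orbit M1)) : monmul j p ->
  tsub (monideal 1) (fun K y => forall K1 (g : gmap (orbit K) (orbit K1))
    (g1 : gmap (orbit M1) (orbit K1)), monideal j.+1 (tTr g1 p * tTr g y)).
Proof.
move=> jp; apply: monideal_ind; first split.
- by move=> K K1 g g1; rewrite tTr0 mulr0; apply: monideal0.
- by move=> K a b Fa Fb K1 g g1; rewrite tTrD mulrDr; apply: monidealD.
- by move=> K2 K3 g3 a Fa K1 g g1; rewrite -tTr_comp; apply: Fa.
- by move=> K q q1 K1 g g1; apply: monideal_tTr_mul.
Qed.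

Lemma monidealM j M (z y : T (orbit M)) :
  monideal j z -> monideal 1 y -> monideal j.+1 (z * y).
Proof.
suff mul_tTr : tsub (monideal j) (fun M z => forall K (g : gmap (orbit M) (orbit K)) y,
    monideal 1 y -> monideal j.+1 (tTr g z * y)).
  by move=> /mul_tTr /(_ M (gid _) y) jy /jy; rewrite tTr_id.
apply: monideal_ind; first split.
- by move=> M' K g y' _; rewrite tTr0 mul0r; apply: monideal0.
- by move=> M' a b Fa Fb K g y' y1; rewrite tTrD mulrDl; apply: monidealD; [apply: Fa | apply: Fb].
- by move=> M1 K1 g1 a Fa K g y' y1; rewrite -tTr_comp; apply: Fa.
- move=> M1 p jp K g y' /(monideal_mul_monmul jp) /(_ K (gid _) g).
  by rewrite tTr_id.
Qed.

Lemma tpow_tgen1_sub_monideal j : tsub (tpow (tgen1 x) j.+1) (monideal j.+1).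
Proof.
have gen_sub : tsub (tgen1 x) (monideal 1).
  exact: tgen1_min (monideal_tideal 1) (monmul_sub monmul_x).
elim: j => [//|j IH] K y xy; apply: xy; first exact: monideal_tideal.
by move=> M _ [a [b [ja b1 ->]]]; apply: monidealM; [apply: IH | apply: gen_sub].
Qed.

End MonomialIdeal.

Lemma size_sum_count_mem (K : finType) (u : seq K) :
  size u = (\sum_(k : K) count_mem k u)%N.
Proof.
elim: u => [|a u IH]; first by rewrite big1.
rewrite /= big_split /= -IH (bigD1 a) //= eqxx big1 // => k ka.
by rewrite eq_sym (negbTE ka).
Qed.

Lemma pigeonhole_count (K : finType) (u : seq K) m :
  (#|K| * m < size u)%N -> exists k, (m < count_mem k u)%N.
Proof.
move=> large_u; apply/existsP; apply: contraLR large_u => /existsPn few.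
rewrite -leqNgt size_sum_count_mem -sum_nat_const.
by apply: leq_sum => k _; rewrite leqNgt few.
Qed.

Section PowerBound.
Variables (gT : finGroupType) (T : tambara gT) (H0 : {group gT}) (x : T (orbit H0)).
Variable I : tfam T.
Arguments I : clear implicits.
Hypotheses (I_ideal : is_tideal I) (n : nat) (xn_in : I H0 (x ^+ n)).

Definition mono_key M (d : monomial H0 M) : {group gT} * {set gT} * {set gT} :=
  (mono_lvl d, val (mono_nm d (obase _)), val (mono_res d (obase _))).

Lemma mono_key_val M (d1 d2 : monomial H0 M) :
  mono_key d1 = mono_key d2 -> mono_val x d1 = mono_val x d2.
Proof.
case: d1 d2 => M1 b1 c1 [M2 b2 c2] [E]; subst M2 => Eb Ec.
have -> : b1 = b2 by apply: orbit_gmap_ext; apply: val_inj.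
by have -> : c1 = c2 by apply: orbit_gmap_ext; apply: val_inj.
Qed.

Let key_count := #|{: {group gT} * {set gT} * {set gT}}|.

(* A product of more than [key_count * n] monomials repeats one of them at
   least [n] times, and the [n]-th power of a monomial is a norm of a
   restriction of [x ^+ n]. *)
Lemma monmul_sub_ideal : tsub (monmul x (key_count * n).+1) I.
Proof.
move=> M _ [c [s [size_s ->]]].
have [k key_k] : exists k, (n < count (fun d => mono_key d == k) s)%N.
  have [|k] := @pigeonhole_count _ (map (@mono_key M) s) n; first by rewrite size_map.
  by rewrite count_map; exists k.
have [d0 key_d0] : exists d0 : monomial H0 M, mono_key d0 = k.
  by elim: s {size_s} key_k => //= d s IH; case: eqP => [<-|_ /IH //]; exists d.
rewrite (bigID (fun d => mono_key d == k)) /=.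
rewrite (eq_bigr (fun _ => mono_val x d0)) => [|d /eqP]; last first.
  by rewrite -key_d0 => /mono_key_val.
rewrite big_const_seq iter_mulr_1 -(subnK (ltnW key_k)) exprD mulrAC mulrA.
apply: tidealMl => //; rewrite /mono_val -tNX -tRX.
by apply: tidealN => //; apply: tidealR.
Qed.

Lemma tpow_tgen1_sub_ideal : exists N, (1 <= N)%N /\ tsub (tpow (tgen1 x) N) I.
Proof.
exists (key_count * n).+1; split=> // K y /tpow_tgen1_sub_monideal.
apply: monideal_ind => //; first exact: tideal_add_closed.
- by move=> M K' g a; apply: tidealTr.
- exact: monmul_sub_ideal.
Qed.

End PowerBound.

Section Radicals.
Variables (gT : finGroupType) (T : tambara gT).
Implicit Types (I J P : tfam T) (H K M : {group gT}).

Lemma tpow_mono P P' n : tsub P P' -> tsub (tpow P n.+1) (tpow P' n.+1).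
Proof.
move=> PP'; elim: n => [//|n IH] H y Py J J_ideal prodJ; apply: Py => // K z [a [b [Pa Pb ->]]].
by apply: prodJ; exists a, b; split; [apply: IH | apply: PP' | ].
Qed.

Lemma exprS_tpow H (x : T (orbit H)) n : tpow (tgen1 x) n.+1 (x ^+ n.+1).
Proof.
elim: n => [|n IH]; first by rewrite expr1; apply: tgen1_self.
move=> J _ prodJ; apply: prodJ; exists (x ^+ n.+1), x.
by split; [apply: IH | apply: tgen1_self | rewrite exprSr].
Qed.

Lemma tradical_tgen1 I H (x : T (orbit H)) K (y : T (orbit K)) :
  tradical I x -> tgen1 x y -> tradical I y.
Proof.
case=> [[|n] [// _ xn_sub]] xy; exists n.+1; split=> // M z yz.
apply/xn_sub/(tpow_mono _ yz); exact: tgen1_min (tgen1_tideal x) xy.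
Qed.

Lemma tradicalP I H (x : T (orbit H)) :
  is_tideal I -> tradical I x <-> exists n, I H (x ^+ n).
Proof.
move=> I_ideal; split=> [[[|n] [// _ xn_sub]]|[n xn_in]].
  by exists n.+1; apply/xn_sub/exprS_tpow.
by have := tpow_tgen1_sub_ideal I_ideal xn_in.
Qed.

Lemma tideal_exprD I M (a b : T (orbit M)) n m : is_tideal I ->
  I M (a ^+ n) -> I M (b ^+ m) -> I M ((a + b) ^+ (n + m)).
Proof.
move=> I_ideal an bm; rewrite exprDn.
apply: (big_ind (I M)); [exact: tideal0 | exact: tidealD | move=> [i /= _] _].
rewrite -mulr_natl; apply: (tidealMl I_ideal).
have [mi|im] := leqP m i.
  by rewrite -(subnK mi) exprD; apply: (tidealMl I_ideal); apply: (tidealMl I_ideal).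
have ni : (n <= n + m - i)%N by rewrite -addnBA ?leq_addr // ltnW.
by rewrite -(subnK ni) exprD -mulrA; apply: (tidealMl I_ideal); apply: (tidealMr I_ideal).
Qed.

Lemma tradical_tideal I : is_tideal I -> is_tideal (tradical I).
Proof.
move=> I_ideal; have radP H (y : T (orbit H)) := tradicalP y I_ideal.
apply: tidealP; first split.
- by move=> M; apply/radP; exists 1%N; rewrite expr1; apply: tideal0.
- move=> M a b /radP[n an] /radP[m bm]; apply/radP.
  by exists (n + m)%N; apply: tideal_exprD.
- move=> M c v /radP[n vn]; apply/radP.
  by exists n; rewrite exprMn; apply: tidealMl.
- move=> M K f a /radP[n an]; apply/radP.
  by exists n; rewrite -tRX; apply: tidealR.
- move=> M K f a ra; apply: (tradical_tgen1 ra).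
  by apply: (tidealTr (tgen1_tideal a)); apply: tgen1_self.
- move=> M K f a /radP[n an]; apply/radP.
  by exists n; rewrite -tNX; apply: tidealN.
Qed.

Lemma sub_tradical I : is_tideal I -> tsub I (tradical I).
Proof. by move=> I_ideal H y Iy; apply/(tradicalP _ I_ideal); exists 1%N; rewrite expr1. Qed.

Lemma tradical_mono I J : tsub I J -> tsub (tradical I) (tradical J).
Proof. by move=> IJ H y [n [n1 yn_sub]]; exists n; split=> // M z /yn_sub /IJ. Qed.

Lemma tradical_radideal I : is_tideal I -> is_radideal (tradical I).
Proof.
move=> I_ideal; have rad_ideal := tradical_tideal I_ideal.
split=> // H y; split; first exact: sub_tradical.
move=> /(tradicalP _ rad_ideal)[n /(tradicalP _ I_ideal)[m ynm]].
by apply/(tradicalP _ I_ideal); exists (n * m)%N; rewrite exprM.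
Qed.

Lemma radideal_tradical_sub J : is_radideal J -> tsub (tradical J) J.
Proof. by case=> _ J_rad H y /J_rad. Qed.

Lemma tsumfam_min L (I : L -> tfam T) J :
  is_tideal J -> (forall l, tsub (I l) J) -> tsub (tsumfam I) J.
Proof.
move=> J_ideal IJ H _ [n [l [a [Ia ->]]]].
by apply: (big_ind (J H)); [exact: tideal0 | exact: tidealD | move=> i _; apply: IJ].
Qed.

Lemma tcap_radideal L (I : L -> tfam T) :
  (forall l, is_radideal (I l)) -> is_radideal (tcap I).
Proof.
move=> I_rad; have cap_ideal := tcap_tideal (fun l => (I_rad l).1).
split=> // H y; split; first exact: sub_tradical.
case=> n [n1 yn_sub] l; apply: radideal_tradical_sub (I_rad l) _ _ _.
by exists n; split=> // M z /yn_sub; apply.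
Qed.

Lemma tsub_tjoin L (I : L -> tfam T) l :
  (forall l, is_tideal (I l)) -> tsub (I l) (tjoin I).
Proof.
move=> I_ideal H y Iy; apply: sub_tradical; first exact: tsumfam_tideal.
exact: tsumfam_sub Iy.
Qed.

Lemma tjoin_min L (I : L -> tfam T) J :
  is_radideal J -> (forall l, tsub (I l) J) -> tsub (tjoin I) J.
Proof.
move=> J_rad IJ H y /(tradical_mono (tsumfam_min J_rad.1 IJ)).
exact: radideal_tradical_sub.
Qed.

(* If [y ^+ n] is a sum of elements [a i] of the [I l], then [y ^+ n.+1] is the
   sum of the [y * a i], which lie in [J] as well when [y] does. *)
Lemma tmeet_tjoin L (J : tfam T) (I : L -> tfam T) :
  is_radideal J -> (forall l, is_tideal (I l)) ->
  teq (tmeet J (tjoin I)) (tjoin (fun l => tmeet J (I l))).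
Proof.
move=> J_rad I_ideal; have sum_ideal := tsumfam_tideal I_ideal.
have meet_ideal l : is_tideal (tmeet J (I l)) := tmeet_tideal J_rad.1 (I_ideal l).
move=> H y; split=> [[Jy]|y_in].
  case/(tradicalP _ sum_ideal) => n [k [l [a [Ia yn]]]].
  apply/(tradicalP _ (tsumfam_tideal meet_ideal)).
  exists n.+1, k, l, (fun i => y * a i); rewrite exprS yn mulr_sumr.
  by split=> // i; split; [apply: tidealMr J_rad.1 _ _ _ Jy | apply: tidealMl].
split.
  apply: (radideal_tradical_sub J_rad); apply: tradical_mono y_in.
  by apply: (tsumfam_min J_rad.1) => l M z [].
apply: tradical_mono y_in => M _ [k [l [a [JIa ->]]]].
by exists k, l, a; split=> // i; case: (JIa i).
Qed.

End Radicals.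

Theorem proposition5p2 (gT : finGroupType) (T : tambara gT) :
  (* levelwise sums of Tambara ideals are Tambara ideals *)
  (forall (L : Type) (I : L -> tfam T),
      (forall l, is_tideal (I l)) -> is_tideal (tsumfam I)) /\
  (* meets in RadId_G(T): levelwise intersections *)
  (forall (L : Type) (I : L -> tfam T),
      (forall l, is_radideal (I l)) ->
      [/\ is_radideal (tcap I), (forall l, tsub (tcap I) (I l))
        & (forall J, is_radideal J -> (forall l, tsub J (I l)) -> tsub J (tcap I))]) /\
  (* joins in RadId_G(T): radical of the levelwise sum *)
  (forall (L : Type) (I : L -> tfam T),
      (forall l, is_radideal (I l)) ->
      [/\ is_radideal (tjoin I), (forall l, tsub (I l) (tjoin I))
        & (forall J, is_radideal J -> (forall l, tsub (I l) J) -> tsub (tjoin I) J)]) /\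
  (* frame law: finite meets distribute over arbitrary joins *)
  (forall (L : Type) (J : tfam T) (I : L -> tfam T),
      is_radideal J -> (forall l, is_radideal (I l)) ->
      teq (tmeet J (tjoin I)) (tjoin (fun l => tmeet J (I l)))).
Proof.
split; first by move=> L I; apply: tsumfam_tideal.
split.
  move=> L I I_rad; split; first exact: tcap_radideal.
    by move=> l H y; apply.
  by move=> J _ JI H y Jy l; apply: JI.
split.
  move=> L I I_rad; have I_ideal l := (I_rad l).1.
  split; first exact/tradical_radideal/tsumfam_tideal.
    by move=> l; apply: tsub_tjoin.
  by move=> J J_rad; apply: tjoin_min.
by move=> L J I J_rad I_rad; apply: tmeet_tjoin => // l; case: (I_rad l).
Qed.
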